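(* Let $n\ge2$ and let $\mathcal{S}$ be a set of two-factor interactions among factors $F_1,\dots,F_n$. Suppose at least one of the following holds: (i) every factor appears in at most three interactions of $\mathcal{S}$, and there is no set of four factors for which $\mathcal{S}$ contains all six pairwise interactions; (ii) there are at most three factors each of which appears in more than two interactions of $\mathcal{S}$; (iii) either there is no sequence of distinct factors $G_1,\dots,G_m$ ($m\ge3$) with $G_1G_2,G_2G_3,\dots,G_{m-1}G_m,G_mG_1\in\mathcal{S}$, or there is at least one factor common to all such sequences. Then there exists a blocked $2^n$ factorial in blocks of size four from which all main effects and all interactions in $\mathcal{S}$ are estimable.
   Context: A blocked $2^n$ factorial in blocks of size four is specified by a $2\times n$ generator matrix $X$ over $\mathrm{GF}(2)$ of rank $2$: the principal block is the row space of $X$ and the other blocks are its cosets in $\mathrm{GF}(2)^n$. An effect of a set $S$ of factors, with contrast $(-1)^{\sum_{j\in S}x_j}$, is estimable iff its contrast sums to zero over every block. *)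

From HB Require Import structures.
From mathcomp Require Import all_boot all_order all_algebra.
Set Implicit Arguments. Unset Strict Implicit. Unset Printing Implicit Defensive.
Import GRing.Theory.
Local Open Scope ring_scope.

(* Factors are indexed by 'I_n; a treatment combination is a row vector
   x : 'rV['F_2]_n.  A design is a generator matrix X : 'M['F_2]_(2, n)
   of rank 2. *)

Definition block (n : nat) (X : 'M['F_2]_(2, n)) (c : 'rV['F_2]_n)
  : pred 'rV['F_2]_n := fun x => (x - c <= X)%MS.

Definition contrast (n : nat) (S : {set 'I_n}) (x : 'rV['F_2]_n) : int :=
  if (\sum_(j in S) x 0 j == 0 :> 'F_2) then 1 else -1.

Definition estimable (n : nat) (X : 'M['F_2]_(2, n)) (S : {set 'I_n}) : Prop :=
  forall c : 'rV['F_2]_n, \sum_(x | block X c x) contrast S x = 0.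

Definition two_factor_set (n : nat) (Sg : {set {set 'I_n}}) : Prop :=
  forall e, e \in Sg -> #|e| = 2%N.

Definition degree (n : nat) (Sg : {set {set 'I_n}}) (i : 'I_n) : nat :=
  #|[set e in Sg | i \in e]|.

Definition is_cycle (n : nat) (Sg : {set {set 'I_n}}) (s : seq 'I_n) : Prop :=
  uniq s /\ (3 <= size s)%N /\
  forall (x0 : 'I_n) (k : nat), (k < size s)%N ->
    [set nth x0 s k; nth x0 s (k.+1 %% size s)] \in Sg.

Definition cond_i (n : nat) (Sg : {set {set 'I_n}}) : Prop :=
  (forall i, (degree Sg i <= 3)%N) /\
  ~ (exists F : {set 'I_n}, #|F| = 4%N /\
       forall i j, i \in F -> j \in F -> i != j -> [set i; j] \in Sg).

Definition cond_ii (n : nat) (Sg : {set {set 'I_n}}) : Prop :=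
  (#|[set i | (2 < degree Sg i)%N]| <= 3)%N.

Definition cond_iii (n : nat) (Sg : {set {set 'I_n}}) : Prop :=
  (forall s, ~ is_cycle Sg s) \/
  (exists i : 'I_n, forall s, is_cycle Sg s -> i \in s).

From HB Require Import structures.
From mathcomp Require Import all_boot all_order all_algebra all_fingroup.
From mathcomp Require Import zify.

Set Implicit Arguments. Unset Strict Implicit. Unset Printing Implicit Defensive.

(* Colour the factors with three colours, no interaction of Sg joining two
   factors of the same colour, and send the three colours to the three
   nonzero vectors of GF(2)^2; these are the columns of a 2 x n generator
   matrix X.  An effect of S is estimable as soon as the sum of the columns of
   X over S is nonzero, which holds for main effects (nonzero columns) and for
   the interactions of Sg (distinct columns); X has rank 2 once two colours
   occur.  The theorem thus reduces to 3-colourability of the interaction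
   graph under each of the three conditions:
   (i)   Brooks' theorem for maximum degree three (brooks_subcubic), proved
         by a minimal counterexample, degree list colouring and gluing
         colourings along separators of one or two vertices;
   (ii)  greedy colouring: repeatedly remove vertices of degree at most two
         until at most three vertices remain (colorable_few_high_degree);
   (iii) a vertex meeting every cycle gets colour 0 and the remaining forest
         is 2-coloured (colorable_cycles_through). *)

Section ThreeColoring.

Variables (T : finType) (e : rel T).
Hypotheses (esym : symmetric e) (eirr : irreflexive e).

Definition nbr (V : {set T}) (y : T) : {set T} := [set z in V | e y z].

Definition proper_on (V : {set T}) (f : T -> 'I_3) : Prop :=
  forall i j, i \in V -> j \in V -> e i j -> f i != f j.

Definition list_colorable (V : {set T}) (L : T -> {set 'I_3}) : Prop :=
  exists2 f, proper_on V f & forall y, y \in V -> f y \in L y.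

Definition colorable (V : {set T}) : Prop := list_colorable V (fun=> setT).

Lemma proper_colorable (V : {set T}) (f : T -> 'I_3) :
  proper_on V f -> colorable V.
Proof. by exists f => // y _; rewrite inE. Qed.

Lemma proper_sub (V V' : {set T}) (f : T -> 'I_3) :
  V \subset V' -> proper_on V' f -> proper_on V f.
Proof. by move=> /subsetP sV fV' i j /sV iV /sV jV; apply: fV'. Qed.

Lemma list_colorable0 (L : T -> {set 'I_3}) : list_colorable set0 L.
Proof. by exists (fun=> ord0) => [i j|y]; rewrite inE. Qed.

Lemma nbr_sub (V V' : {set T}) (y : T) : V \subset V' -> nbr V y \subset nbr V' y.
Proof.
by move=> /subsetP sV; apply/subsetP => z; rewrite !inE => /andP[/sV -> ->].
Qed.

Lemma card_nbr_sub (V V' : {set T}) (y : T) :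
  V \subset V' -> #|nbr V y| <= #|nbr V' y|.
Proof. by move=> sV; apply/subset_leq_card/nbr_sub. Qed.

Lemma card_nbr_split (U V : {set T}) (y : T) :
  #|nbr V y| = #|nbr (V :&: U) y| + #|nbr (V :\: U) y|.
Proof.
rewrite -(cardsID U (nbr V y)); congr (_ + _); apply: eq_card => z;
  by rewrite !inE; case: (z \in V); case: (z \in U); case: (e y z).
Qed.

Lemma exists_notin (A B : {set 'I_3}) : #|A| < #|B| -> exists2 c, c \in B & c \notin A.
Proof.
by move=> ltAB; apply/subsetPn; apply: contraTN ltAB => /subset_leq_card; rewrite -leqNgt.
Qed.

Lemma avoid_colors (A : {set 'I_3}) : #|A| <= 2 -> exists c, c \notin A.
Proof.
by move=> hA; have [|c _ cA] := @exists_notin A setT; [rewrite cardsT card_ord | exists c].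
Qed.

Lemma proper_extend (Y : {set T}) (y : T) (c : 'I_3) (f : T -> 'I_3) :
  proper_on Y f -> c \notin f @: nbr Y y ->
  proper_on (y |: Y) (fun z => if z == y then c else f z).
Proof.
move=> fY cN.
have away z : z \in Y -> e y z -> f z != c.
  by move=> zY eyz; apply: contraNneq cN => <-; apply: imset_f; rewrite inE zY.
have inY z : z \in y |: Y -> z != y -> z \in Y by rewrite !inE => /predU1P[->|]; rewrite ?eqxx.
move=> i j iV jV eij.
case: (eqVneq i y) => [iy | /(inY _ iV) iY]; case: (eqVneq j y) => [jy | /(inY _ jV) jY].
- by rewrite iy jy eirr in eij.
- by rewrite eq_sym away // -iy.
- by rewrite away // -jy esym.
- exact: fY.
Qed.

Lemma list_colorable_extend (V : {set T}) (L : T -> {set 'I_3}) (y : T) :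
  y \in V -> list_colorable (V :\ y) L -> #|nbr V y| < #|L y| ->
  list_colorable V L.
Proof.
move=> yV [f fV fL] small.
have [c cL cN] : exists2 c, c \in L y & c \notin f @: nbr (V :\ y) y.
  apply: exists_notin; apply: leq_ltn_trans small.
  exact: leq_trans (leq_imset_card _ _) (card_nbr_sub _ (subD1set _ _)).
exists (fun z => if z == y then c else f z); first by rewrite -{1}(setD1K yV); apply: proper_extend.
move=> z zV; case: (eqVneq z y) => [-> // | zy].
by apply: fL; rewrite !inE zy.
Qed.

Lemma degenerate_list_colorable (L : T -> {set 'I_3}) (V : {set T}) :
  (forall U : {set T}, U \subset V -> U != set0 ->
     list_colorable U L \/ exists2 y, y \in U & #|nbr U y| < #|L y|) ->
  list_colorable V L.
Proof.
elim: {V}_.+1 {-2}V (ltnSn #|V|) => // k IH V ltVk hV.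
have [-> | V0] := eqVneq V set0; first exact: list_colorable0.
case: (hV V (subxx V) V0) => [// | [y yV small]].
apply: (list_colorable_extend yV _ small); apply: IH.
  by move: ltVk; rewrite (cardsD1 y V) yV.
by move=> U /subset_trans sU; apply: hV; apply/sU/subD1set.
Qed.

(* U is a union of connected components of the subgraph induced by W. *)
Definition closed_in (W U : {set T}) : bool := [forall u in U, nbr W u \subset U].

Lemma closed_inP (W U : {set T}) :
  reflect (forall u w, u \in U -> w \in W -> e u w -> w \in U) (closed_in W U).
Proof.
apply: (iffP forall_inP) => [cU u w uU wW euw | cU u uU].
  by apply: (subsetP (cU u uU)); rewrite inE wW.
by apply/subsetP => w; rewrite inE => /andP[wW euw]; apply: cU uU wW euw.
Qed.

Lemma degree_list_colorable (L : T -> {set 'I_3}) (W : {set T}) :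
  (forall y, y \in W -> #|nbr W y| <= #|L y|) ->
  (forall U : {set T}, U \subset W -> U != set0 -> closed_in W U ->
     exists2 y, y \in U & #|nbr W y| < #|L y|) ->
  list_colorable W L.
Proof.
elim: {W}_.+1 {-2}W (ltnSn #|W|) => // k IH W ltWk deg strict.
have [-> | W0] := eqVneq W set0; first exact: list_colorable0.
have [y yW small] := strict W (subxx W) W0 (introT (closed_inP _ _) (fun _ _ _ w _ => w)).
have sWy : W :\ y \subset W by apply: subD1set.
apply: (list_colorable_extend yW _ small); apply: IH.
- by move: ltWk; rewrite (cardsD1 y W) yW.
- by move=> z /(subsetP sWy) zW; apply: leq_trans (card_nbr_sub _ sWy) (deg z zW).
move=> U sU U0 /closed_inP cU; have sUW := subset_trans sU sWy.
have [/exists_inP[u uU euy] | noy] := boolP [exists u in U, e u y].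
  exists u => //; apply: leq_trans (deg u (subsetP sUW u uU)).
  apply/proper_card/properP; split; first exact: nbr_sub.
  by exists y; rewrite !inE ?eqxx ?yW ?euy.
have /closed_inP cUW : closed_in W U.
  apply/closed_inP => u w uU wW euw; apply: (cU u w uU _ euw).
  rewrite !inE wW andbT; apply: contraNneq noy => wy.
  by apply/exists_inP; exists u; rewrite // -wy.
have [z zU lt] := strict U sUW U0 (introT (closed_inP _ _) cUW).
by exists z => //; apply: leq_ltn_trans (card_nbr_sub _ sWy) lt.
Qed.

Lemma perm3 (a1 a2 c1 c2 : 'I_3) : (a1 == a2) = (c1 == c2) ->
  exists s : 'I_3 -> 'I_3, [/\ injective s, s a1 = c1 & s a2 = c2].
Proof.
move=> same; pose t := tperm a1 c1.
exists (fun z => tperm (t a2) c2 (t z)); split.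
- by move=> z1 z2 /perm_inj /perm_inj.
- rewrite /t tpermL; case: (eqVneq c1 c2) => [c12 | c12].
    by move: same; rewrite c12 eqxx => /eqP <-; rewrite !tpermL.
  rewrite tpermD //; last by rewrite eq_sym.
  by rewrite -[X in _ != X](tpermL a1 c1) (inj_eq perm_inj) eq_sym same.
- by rewrite tpermL.
Qed.

Lemma glue_at_pair (V A B : {set T}) (s1 s2 : T) (f g : T -> 'I_3) :
  V \subset A :|: B -> A :&: B \subset [set s1; s2] ->
  (forall u w, u \in A -> u \notin B -> w \in B -> w \notin A -> ~~ e u w) ->
  proper_on A f -> proper_on B g -> (f s1 == f s2) = (g s1 == g s2) ->
  colorable V.
Proof.
move=> sV sAB sep fA gB same.
have [s [sinj s1E s2E]] := perm3 same.
have inB z : z \in V -> z \notin A -> z \in B.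
  by move=> /(subsetP sV); rewrite inE => /orP[-> | ->].
have cross u w : u \in A -> w \in V -> w \notin A -> e u w -> s (f u) != g w.
  move=> uA wV wA euw; have wB := inB w wV wA.
  case: (boolP (u \in B)) => uB; last by rewrite (negbTE (sep u w uA uB wB wA)) in euw.
  have fu : s (f u) = g u.
    by have /set2P[-> | ->] : u \in [set s1; s2] by apply: (subsetP sAB); rewrite inE uA.
  by rewrite fu; apply: gB.
apply: (@proper_colorable _ (fun z => if z \in A then s (f z) else g z)).
move=> i j iV jV eij.
case: (boolP (i \in A)) => iA; case: (boolP (j \in A)) => jA.
- by rewrite (inj_eq sinj); apply: fA.
- exact: cross.
- by rewrite eq_sym; apply: cross => //; rewrite esym.
- by apply: gB => //; apply: inB.
Qed.

Lemma pick_pair (Fa Fb : {set 'I_3}) (p : bool) :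
  #|Fa :|: Fb| <= 2 -> #|Fa| + #|Fb| <= 3 ->
  exists ca cb, [/\ ca \notin Fa, cb \notin Fb & (ca == cb) = p].
Proof.
move=> hU hS; case: p.
  have [c] := avoid_colors hU.
  by rewrite inE negb_or => /andP[cFa cFb]; exists c, c; rewrite eqxx.
have hA : #|Fa| <= 2 by apply: leq_trans hU; apply/subset_leq_card/subsetUl.
have hB : #|Fb| <= 2 by apply: leq_trans hU; apply/subset_leq_card/subsetUr.
have card1U (c : 'I_3) (F : {set 'I_3}) : #|F| <= 1 -> #|c |: F| <= 2.
  by move=> hF; rewrite cardsU1 (leq_add (leq_b1 _) hF).
have [hB1 | hA1] : #|Fb| <= 1 \/ #|Fa| <= 1 by lia.
- have [ca caF] := avoid_colors hA; have [cb] := avoid_colors (card1U ca _ hB1).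
  by rewrite !inE negb_or => /andP[ne cbF]; exists ca, cb; rewrite eq_sym (negbTE ne).
- have [cb cbF] := avoid_colors hB; have [ca] := avoid_colors (card1U cb _ hA1).
  by rewrite !inE negb_or => /andP[ne caF]; exists ca, cb; rewrite (negbTE ne).
Qed.

Lemma proper_extend_pair (Y : {set T}) (a b : T) (ca cb : 'I_3) (f : T -> 'I_3) :
  a != b -> ~~ e a b -> proper_on Y f ->
  ca \notin f @: nbr Y a -> cb \notin f @: nbr Y b ->
  exists2 g, proper_on (b |: (a |: Y)) g & g a = ca /\ g b = cb.
Proof.
move=> ab nab fY caN cbN.
pose fa z := if z == a then ca else f z.
exists (fun z => if z == b then cb else fa z); last by split; rewrite /fa ?eqxx // (negbTE ab).
apply: proper_extend; first exact: proper_extend.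
have -> : nbr (a |: Y) b = nbr Y b.
  apply/setP => z; rewrite !inE; case: (eqVneq z a) => // ->.
  by rewrite esym (negbTE nab) !andbF.
suff -> : fa @: nbr Y b = f @: nbr Y b by [].
apply: eq_in_imset => z; rewrite inE /fa => /andP[_ ebz].
by case: (eqVneq z a) ebz => // ->; rewrite esym (negbTE nab).
Qed.

Lemma flexible_pair (Y : {set T}) (a b : T) (f : T -> 'I_3) (p : bool) :
  a != b -> ~~ e a b -> proper_on Y f ->
  #|f @: nbr Y a :|: f @: nbr Y b| <= 2 -> #|f @: nbr Y a| + #|f @: nbr Y b| <= 3 ->
  exists2 g, proper_on (b |: (a |: Y)) g & (g a == g b) = p.
Proof.
move=> ab nab fY hU hS; have [ca [cb [caN cbN pE]]] := pick_pair p hU hS.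
have [g gY [ga gb]] := proper_extend_pair ab nab fY caN cbN.
by exists g; rewrite // ga gb.
Qed.

(* Then {a, b} (or {b} alone, when a has
   no neighbour in U) separates U from x, and colourings of the two sides,
   available by minimality of V, can be glued. *)
Section Separator.

Variables (V U : {set T}) (x a b : T).
Hypothesis IH : forall V' : {set T}, #|V'| < #|V| -> colorable V'.
Hypotheses (xV : x \in V) (aV : a \in V) (bV : b \in V).
Hypotheses (ab : a != b) (nab : ~~ e a b) (exa : e x a) (exb : e x b).
Hypotheses (dega : #|nbr V a| <= 3) (degb : #|nbr V b| <= 3).
Hypotheses (sU : U \subset V :\: [set a; b]) (U0 : U != set0).
Hypotheses (cU : closed_in (V :\: [set a; b]) U) (xU : x \notin U).

Let UV : U \subset V. Proof. exact: subset_trans sU (subsetDl _ _). Qed.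
Let aU : a \notin U. Proof. by apply: contraTN aV => /(subsetP sU); rewrite !inE eqxx. Qed.
Let bU : b \notin U. Proof. by apply: contraTN bV => /(subsetP sU); rewrite !inE eqxx orbT. Qed.

Let sepU u w : u \in U -> w \in V -> w \notin U -> w != a -> w != b -> ~~ e u w.
Proof.
move=> uU wV wU wa wb; apply: contra wU; apply: (closed_inP _ _ cU u w uU).
by rewrite !inE negb_or wa wb.
Qed.

Let smaller (A : {set T}) : A \subset V -> x \notin A -> #|A| < #|V|.
Proof. by move=> sA xA; apply/proper_card/properP; split => //; exists x. Qed.

Let outside_smaller : #|V :\: U| < #|V|.
Proof.
have [u uU] := set0Pn _ U0; apply/proper_card/properP; split; first exact: subsetDl.
by exists u; rewrite ?inE ?uU // (subsetP UV).
Qed.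

Let nbr_sides y : #|nbr U y| + #|nbr (V :\: U) y| = #|nbr V y|.
Proof. by rewrite (card_nbr_split U V) (setIidPr UV). Qed.

Let x_outside y : e x y -> x \in nbr (V :\: U) y.
Proof. by move=> exy; rewrite !inE xU xV esym exy. Qed.

Let glue_across (s1 s2 : T) (f g : T -> 'I_3) :
  s1 \in V :\: U -> s2 \in V :\: U ->
  (forall u w, u \in U -> w \in V :\: U -> e u w -> w \in [set s1; s2]) ->
  proper_on (s2 |: (s1 |: U)) f -> proper_on (V :\: U) g ->
  (f s1 == f s2) = (g s1 == g s2) -> colorable V.
Proof.
move=> s1B s2B attach fA gB same; apply: (glue_at_pair _ _ _ fA gB same).
- by apply/subsetP => z zV; rewrite !inE zV; case: (z \in U); rewrite ?orbT.
- apply/subsetP => z; rewrite !inE => /andP[zA /andP[/negbTE zU _]].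
  by rewrite zU orbF orbC in zA.
move=> u w uA uB wB wA; have uU : u \in U.
  apply: contraNT uB => uU; move: uA; rewrite !inE (negbTE uU) orbF.
  by case/orP=> /eqP->; [move: s2B | move: s1B]; rewrite inE => /andP[_ ->].
apply: contra wA => /(attach u w uU wB); rewrite !inE.
by case/orP=> ->; rewrite ?orbT.
Qed.

Let a_outside : a \in V :\: U. Proof. by rewrite inE aU aV. Qed.
Let b_outside : b \in V :\: U. Proof. by rewrite inE bU bV. Qed.

Let x_ne y : e x y -> x != y. Proof. by apply: contraTneq => ->; rewrite eirr. Qed.

Let side_smaller (s : T) : s \in [set a; b] -> #|b |: (s |: U)| < #|V|.
Proof.
move=> sab; apply: smaller.
  by rewrite !subUset !sub1set bV UV andbT; case/set2P: sab => ->.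
rewrite !inE (negbTE xU) orbF negb_or (x_ne exb) /=; case/set2P: sab => ->; exact: x_ne.
Qed.

(* When a has no neighbour in U, b is a cut vertex. *)
Lemma separated_by_b : #|nbr U a| = 0 -> colorable V.
Proof.
move=> /eqP; rewrite cards_eq0 => /eqP noa.
have [f fA _] := IH (side_smaller (set22 a b)).
have [g gB _] := IH outside_smaller.
apply: (glue_across b_outside b_outside _ fA gB); rewrite ?eqxx //.
move=> u w uU; rewrite inE => /andP[wU wV] euw; rewrite !inE orbb.
apply/negPn/negP => wb; case: (eqVneq w a) => [wa | /sepU - /(_ u uU wV wU wb)].
  have : u \in nbr U a by rewrite inE uU esym -wa euw.
  by rewrite noa inE.
by move/negP; apply.
Qed.

Let attach_ab u w : u \in U -> w \in V :\: U -> e u w -> w \in [set a; b].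
Proof.
move=> uU; rewrite inE => /andP[wU wV] euw; apply: contraLR euw.
by rewrite !inE negb_or => /andP[wa wb]; apply: sepU.
Qed.

Let outside_nonempty y : e x y -> 0 < #|nbr (V :\: U) y|.
Proof. by move=> exy; apply/card_gt0P; exists x; apply: x_outside. Qed.

(* If b has two neighbours in U, its only neighbour on the other side is x,
   which is also a neighbour of a: both patterns on {a, b} are realisable
   there. *)
Lemma separated_b_heavy : 0 < #|nbr U a| -> #|nbr U b| = 2 -> colorable V.
Proof.
move=> ka kb.
have [f fA _] := IH (side_smaller (set21 a b)).
pose Q := V :\: U :\: [set a; b].
have sQ : Q \subset V :\: U by apply: subsetDl.
have [h hQ _] := IH (leq_ltn_trans (subset_leq_card sQ) outside_smaller).
have xQ : x \in Q by rewrite !inE negb_or xU xV (x_ne exa) (x_ne exb).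
have qb : #|nbr Q b| <= 1.
  apply: leq_trans (card_nbr_sub _ sQ) _.
  by rewrite -(leq_add2l 2) -{1}kb nbr_sides.
have nbQ : nbr Q b \subset nbr Q a.
  apply/subsetP => z zb; have /card_le1_eqP x_only := qb.
  have zx : z = x by apply: x_only; rewrite // inE xQ esym exb.
  by rewrite zx inE xQ esym.
have qa : #|nbr Q a| <= 2.
  apply: leq_trans (card_nbr_sub _ sQ) _; rewrite -ltnS; apply: leq_trans dega.
  by rewrite -nbr_sides -add1n leq_add2r.
have hU : #|h @: nbr Q a :|: h @: nbr Q b| <= 2.
  by rewrite (setUidPl (imsetS h nbQ)); apply: leq_trans (leq_imset_card _ _) qa.
have hS : #|h @: nbr Q a| + #|h @: nbr Q b| <= 3.
  exact: leq_add (leq_trans (leq_imset_card _ _) qa) (leq_trans (leq_imset_card _ _) qb).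
have [g gB same] := flexible_pair (f a == f b) ab nab hQ hU hS.
apply: (glue_across a_outside b_outside attach_ab fA (proper_sub _ gB)); last by rewrite same.
apply/subsetP => z; rewrite !inE => /andP[-> ->].
by case: (z == b); case: (z == a).
Qed.

(* If a and b each have at most one neighbour in U, both patterns on {a, b}
   are realisable on the side of U. *)
Lemma separated_light : #|nbr U a| <= 1 -> #|nbr U b| <= 1 -> colorable V.
Proof.
move=> ka kb.
have [g gB _] := IH outside_smaller.
have [h hU _] := IH (smaller UV xU).
have ha : #|h @: nbr U a| <= 1 := leq_trans (leq_imset_card _ _) ka.
have hb : #|h @: nbr U b| <= 1 := leq_trans (leq_imset_card _ _) kb.
have hS : #|h @: nbr U a| + #|h @: nbr U b| <= 2 := leq_add ha hb.
have [f fA same] := flexible_pair (g a == g b) ab nab hU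
  (leq_trans (leq_card_setU _ _).1 hS) (leq_trans hS (leqnSn 2)).
exact: (glue_across a_outside b_outside attach_ab fA gB same).
Qed.

(* The separated case, assuming (by symmetry) that a has at most as many
   neighbours in U as b. *)
Lemma separated_colorable : #|nbr U a| <= #|nbr U b| -> colorable V.
Proof.
move=> kab; have kb2 : #|nbr U b| <= 2.
  rewrite -ltnS; apply: leq_trans degb.
  by rewrite -nbr_sides -addn1 leq_add2l outside_nonempty.
have [ka0 | ka] := posnP #|nbr U a|; first exact: separated_by_b.
have [kb | kb1] := eqVneq #|nbr U b| 2; first exact: separated_b_heavy.
have kb : #|nbr U b| <= 1 by move: kb2; rewrite leq_eqVlt (negbTE kb1).
exact: separated_light (leq_trans kab kb) kb.
Qed.

End Separator.

Lemma nonadjacent_neighbours (V : {set T}) (x : T) :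
  ~ (exists F : {set T}, #|F| = 4 /\
       forall i j, i \in F -> j \in F -> i != j -> e i j) ->
  #|nbr V x| = 3 ->
  exists a b, [/\ a \in nbr V x, b \in nbr V x, a != b & ~~ e a b].
Proof.
move=> noK4 deg3.
have [/exists_inP[a aN /exists_inP[b bN /andP[ab nab]]] | noPair] :=
  boolP [exists a in nbr V x, exists b in nbr V x, (a != b) && ~~ e a b].
  by exists a, b.
exfalso; apply: noK4; exists (x |: nbr V x); split.
  by rewrite cardsU1 deg3 inE eirr andbF.
have adj i j : i \in nbr V x -> j \in nbr V x -> i != j -> e i j.
  move=> iN jN ij; apply: contraNT noPair => nij.
  by apply/exists_inP; exists i => //; apply/exists_inP; exists j; rewrite // ij.
move=> i j /setU1P[-> | iN] /setU1P[-> | jN]; rewrite ?eqxx // => ij.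
- by move: jN; rewrite inE => /andP[].
- by move: iN; rewrite inE esym => /andP[].
- exact: adj.
Qed.

(* Colour a and b with 0;
   the rest is degree list coloured with colours {1, 2} on the neighbours of
   a and b, x having lost two of its (at most three) neighbours. *)
Section ConnectedCase.

Variables (V : {set T}) (x a b : T).
Hypotheses (aV : a \in V) (bV : b \in V).
Hypotheses (ab : a != b) (nab : ~~ e a b) (xa : e x a) (xb : e x b).
Hypothesis deg : forall y, #|nbr V y| <= 3.
Hypothesis through_x : forall U : {set T}, U \subset V :\: [set a; b] -> U != set0 ->
  closed_in (V :\: [set a; b]) U -> x \in U.

Let W := V :\: [set a; b].
Let L y := if e y a || e y b then [set~ ord0] else [set: 'I_3].

Let WV : W \subset V. Proof. exact: subsetDl. Qed.

Let rest_colorable : list_colorable W L.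
Proof.
apply: degree_list_colorable => [y yW | U sU U0 cU].
  rewrite /L; case: ifP => [adj | _].
    rewrite cardsC1 card_ord -ltnS; apply: leq_trans (deg y).
    apply/proper_card/properP; split; first exact: nbr_sub.
    by case/orP: adj => adj; [exists a | exists b]; rewrite !inE ?eqxx ?orbT ?aV ?bV //= esym.
  by rewrite cardsT card_ord (leq_trans (card_nbr_sub _ WV) (deg y)).
exists x; first exact: through_x.
rewrite /L xa /= cardsC1 card_ord.
have abN : [set a; b] \subset nbr V x by rewrite subUset !sub1set !inE aV bV xa xb.
have sN : nbr W x \subset nbr V x :\: [set a; b].
  by apply/subsetP => z; rewrite !inE => /andP[/andP[-> ->] ->].
apply: leq_ltn_trans (subset_leq_card sN) _.
by rewrite cardsD (setIidPr abN) cards2 ab (leq_ltn_trans (leq_sub2r 2 (deg x))).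
Qed.

Lemma connected_colorable : colorable V.
Proof.
have [f fW fL] := rest_colorable.
have ord0_free s : s \in [set a; b] -> ord0 \notin f @: nbr W s.
  move=> sab; apply/imsetP => -[z]; rewrite inE => /andP[zW esz] z0.
  have adj : e z a || e z b by case/set2P: sab esz => -> ez; rewrite !(esym z) ez ?orbT.
  by have := fL z zW; rewrite /L adj !inE -z0 eqxx.
have [g gV _] := proper_extend_pair ab nab fW (ord0_free a (set21 a b)) (ord0_free b (set22 a b)).
apply: proper_colorable (proper_sub _ gV).
by apply/subsetP => z zV; rewrite !inE zV; case: (z == b); case: (z == a).
Qed.

End ConnectedCase.

(* In a
   minimal counterexample every vertex has three neighbours; pick x and two
   non-adjacent neighbours a, b.  Either some component of V \ {a, b} misses
   x (separated case, with a and b ordered by their number of neighbours in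
   it) or none does (connected case). *)
Theorem brooks_subcubic :
  (forall y, #|nbr setT y| <= 3) ->
  ~ (exists F : {set T}, #|F| = 4 /\
       forall i j, i \in F -> j \in F -> i != j -> e i j) ->
  forall V : {set T}, colorable V.
Proof.
move=> deg3 noK4 V.
elim: {V}_.+1 {-2}V (ltnSn #|V|) => // k IHk V ltVk.
have IH (V' : {set T}) : #|V'| < #|V| -> colorable V'.
  by move=> lt; apply: IHk; apply: leq_trans lt ltVk.
have deg y : #|nbr V y| <= 3 by apply: leq_trans (card_nbr_sub _ (subsetT V)) (deg3 y).
have [/exists_inP[y yV small] | /exists_inP noSmall] := boolP [exists y in V, #|nbr V y| <= 2].
  apply: (list_colorable_extend yV (IH _ _)); first by rewrite (cardsD1 y V) yV.
  by rewrite cardsT card_ord.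
have [-> | /set0Pn[x xV]] := eqVneq V set0; first exact: list_colorable0.
have deg3x : #|nbr V x| = 3.
  apply/eqP; rewrite eqn_leq deg ltnNge /=.
  by apply/negP => small; apply: noSmall; exists x.
have [a [b [aN bN ab nab]]] := nonadjacent_neighbours noK4 deg3x.
move: aN bN; rewrite !inE => /andP[aV xa] /andP[bV xb].
have [/existsP[U /and4P[sU U0 cU xU]] | noU] := boolP [exists U : {set T},
    [&& U \subset V :\: [set a; b], U != set0, closed_in (V :\: [set a; b]) U & x \notin U]].
  have [kab | kba] := leqP #|nbr U a| #|nbr U b|.
    exact: (separated_colorable IH xV aV bV ab nab xa xb (deg a) (deg b) sU U0 cU xU kab).
  rewrite setUC in sU cU.
  by apply: (separated_colorable IH xV bV aV _ _ xb xa (deg b) (deg a) sU U0 cU xU (ltnW kba));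
    rewrite 1?eq_sym 1?esym.
apply: (connected_colorable aV bV ab nab xa xb deg) => U sU U0 cU.
by apply: contraNT noU => xU; apply/existsP; exists U; rewrite sU U0 cU xU.
Qed.

Lemma colorable_small (V : {set T}) : #|V| <= 3 -> colorable V.
Proof.
move=> small; apply: (@proper_colorable _ (fun y => inord (index y (enum V)))).
move=> i j iV jV eij; apply: contraTneq eij => /(congr1 val) /=.
have idx z : z \in V -> index z (enum V) < 3.
  by move=> zV; apply: leq_trans small; rewrite cardE index_mem mem_enum.
rewrite !inordK ?idx // => /(congr1 (nth i (enum V))).
by rewrite !nth_index ?mem_enum // => ->; rewrite eirr.
Qed.

(* Few vertices of degree above two: peel off vertices of degree at most two;
   what cannot be peeled consists of high degree vertices only. *)
Theorem colorable_few_high_degree :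
  #|[set y | 2 < #|nbr setT y|]| <= 3 -> forall V : {set T}, colorable V.
Proof.
move=> few V; apply: degenerate_list_colorable => U _ _.
have [/exists_inP[y yU small] | /exists_inP big] := boolP [exists y in U, #|nbr U y| <= 2].
  by right; exists y; rewrite // cardsT card_ord.
left; apply: colorable_small; apply: leq_trans few; apply/subset_leq_card/subsetP => y yU.
rewrite inE; apply: leq_trans (card_nbr_sub _ (subsetT U)); rewrite ltnNge.
by apply/negP => small; apply: big; exists y.
Qed.

Definition graph_cycle (s : seq T) : Prop :=
  uniq s /\ 3 <= size s /\
  forall x0 k, k < size s -> e (nth x0 s k) (nth x0 s (k.+1 %% size s)).

Definition simple_path (V : {set T}) (s : seq T) : bool :=
  [&& uniq s, all (fun z => z \in V) s & if s is y :: p then path e y p else true].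

(* A longest simple path in V cannot be extended at its head y: every
   neighbour of y in V already lies on it. *)
Lemma maximal_path (V : {set T}) (y0 : T) : y0 \in V ->
  exists y p, simple_path V (y :: p) /\ forall z, z \in V -> e y z -> z \in y :: p.
Proof.
move=> y0V; pose P m := [exists t : m.-tuple T, simple_path V t].
have P1 : P 1 by apply/existsP; exists [tuple y0]; rewrite /simple_path /= y0V.
have ub m : P m -> m <= #|T|.
  case/existsP=> t /and3P[ut _ _]; rewrite -(size_tuple t) cardT.
  by apply: uniq_leq_size ut _ => z _; rewrite mem_enum.
have [m Pm maxm] := ex_maxnP (ex_intro _ 1 P1) ub.
case/existsP: Pm => t; move: (size_tuple t) (maxm 1 P1); case: (tval t) => [<- // | y p] szt _ yp.
exists y, p; split => // z zV eyz; apply: contraT => zN.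
have : P (size (z :: y :: p)).
  apply/existsP; exists (in_tuple (z :: y :: p)); move: yp.
  by rewrite /simple_path /= zN zV esym eyz.
by move/maxm; rewrite -szt /= ltnn.
Qed.

Lemma chord_cycle (y z : T) (p : seq T) :
  uniq (y :: p) -> path e y p -> z \in y :: p -> e y z -> z != nth y p 0 ->
  graph_cycle (take (index z (y :: p)).+1 (y :: p)).
Proof.
move=> uyp pth zin eyz zne; set j := index z (y :: p).
have jlt : j < size (y :: p) by rewrite index_mem.
have zj : nth y (y :: p) j = z by rewrite nth_index.
have j0 : j != 0 by apply: contraTneq eyz => j0; rewrite -zj j0 /= eirr.
have j1 : j != 1 by apply: contra_neq zne => j1; rewrite -zj j1.
have szs : size (take j.+1 (y :: p)) = j.+1 by rewrite size_takel.
split; first by rewrite take_uniq.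
split; first by rewrite szs; move: j0 j1; case: (j) => [|[|]].
move=> x0 k; rewrite szs => kj; rewrite !nth_take ?ltn_mod //.
case: (ltngtP k j) => [kj' | jk | ->].
- rewrite modn_small //; exact: (pathP x0 pth) k (leq_trans kj' jlt).
- by move: kj; rewrite ltnS leqNgt jk.
- by rewrite modnn (set_nth_default y x0) // zj /= esym.
Qed.

Lemma find_cycle (V : {set T}) : V != set0 ->
  (forall y, y \in V -> 1 < #|nbr V y|) ->
  exists2 s, graph_cycle s & {subset s <= V}.
Proof.
case/set0Pn=> y0 /maximal_path[y [p [/and3P[uyp /allP Vyp pth] ext]]] deg2.
have yV : y \in V by apply: Vyp; rewrite mem_head.
have [z zN zne] : exists2 z, z \in nbr V y & z != nth y p 0.
  have /card_gt0P[z] : 0 < #|nbr V y :\ nth y p 0|.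
    have := deg2 y yV; rewrite (cardsD1 (nth y p 0)).
    by case: (_ \in _); rewrite ?add1n ?add0n // => /ltnW.
  by rewrite !inE => /andP[zne zN]; exists z; rewrite ?inE.
move: zN; rewrite inE => /andP[zV eyz].
exists (take (index z (y :: p)).+1 (y :: p)); first exact: chord_cycle (ext z zV eyz) eyz zne.
by move=> w /mem_take; apply: Vyp.
Qed.

(* Without cycles in V, colours 1 and 2 suffice: every nonempty part of an
   acyclic graph has a vertex of degree at most one. *)
Lemma acyclic_list_colorable (V : {set T}) :
  (forall s, graph_cycle s -> {subset s <= V} -> False) ->
  list_colorable V (fun=> [set~ ord0]).
Proof.
move=> acyclic; apply: degenerate_list_colorable => U sU U0; right.
have [/exists_inP[y yU small] | /exists_inP deg2] := boolP [exists y in U, #|nbr U y| <= 1].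
  by exists y; rewrite // cardsC1 card_ord.
have deg : forall y, y \in U -> 1 < #|nbr U y|.
  by move=> y yU; rewrite ltnNge; apply/negP => small; apply: deg2; exists y.
have [s cs sU'] := find_cycle U0 deg.
by case: (acyclic s cs) => z /sU' /(subsetP sU).
Qed.

(* If a vertex i0 meets every cycle, colour i0 with 0 and the acyclic rest
   with 1 and 2. *)
Theorem colorable_cycles_through (i0 : T) :
  (forall s, graph_cycle s -> i0 \in s) -> colorable setT.
Proof.
move=> through.
have [f fV fL] : list_colorable [set~ i0] (fun=> [set~ ord0]).
  apply: acyclic_list_colorable => s cs /(_ i0 (through s cs)).
  by rewrite !inE eqxx.
apply: proper_colorable (proper_sub _ (proper_extend (y := i0) (c := ord0) fV _)).
  by apply/subsetP => z _; rewrite !inE orbN.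
apply/imsetP => -[z]; rewrite inE => /andP[zV _] /eqP; apply/negP.
by rewrite eq_sym; have := fL z zV; rewrite !inE.
Qed.

End ThreeColoring.

Import GRing.Theory.
Local Open Scope ring_scope.

Lemma F2_cases (a : 'F_2) : a = 0 \/ a = 1.
Proof. by case: a => [[|[|k]] lt2]; [left | right | by []]; apply/val_inj. Qed.

(* An effect is estimable as soon as some row r of the row space of X (that
   is, a treatment combination of the principal block) has odd weight on S:
   translating by r permutes each block and flips the sign of the contrast. *)
Lemma estimable_of_row (n : nat) (X : 'M['F_2]_(2, n)) (S : {set 'I_n})
    (r : 'rV['F_2]_n) :
  (r <= X)%MS -> \sum_(j in S) r 0 j = 1 -> estimable X S.
Proof.
move=> rX rS c; set s := \sum_(x | block X c x) contrast S x.
have shift_block x : block X c (x + r) = block X c x.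
  rewrite /block; apply/idP/idP => h; last by rewrite addrAC addmx_sub.
  have -> : x - c = (x + r - c) + (-1) *: r by rewrite scaleN1r addrAC addrK.
  by apply: addmx_sub => //; apply: scalemx_sub.
have shift_contrast x : contrast S (x + r) = - contrast S x.
  rewrite /contrast; have -> : \sum_(j in S) (x + r) 0 j = \sum_(j in S) x 0 j + 1.
    by rewrite -rS -big_split; apply: eq_bigr => j _; rewrite mxE.
  case: (F2_cases (\sum_(j in S) x 0 j)) => ->.
    by rewrite add0r eqxx oner_eq0.
  by rewrite (_ : 1 + 1 = 0 :> 'F_2) ?eqxx ?oner_eq0 //; apply/eqP.
have : s = - s.
  rewrite {1}/s (reindex_inj (addIr r)) /= /s -sumrN.
  by apply: eq_big => x; [exact: shift_block | move=> _; exact: shift_contrast].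
by clearbody s; lia.
Qed.

Lemma color_by_two_tests (x y c0 c1 : 'I_3) : c0 != c1 ->
  (x != c1) = (y != c1) -> (x != c0) = (y != c0) -> x = y.
Proof. by move: x y c0 c1; do 4 case=> [[|[|[|?]]] ?] //=; move=> *; apply/val_inj. Qed.

(* The design attached to a colouring g of the factors by three colours using
   two distinct colours c0 = g i0, c1 = g j0: factor j gets the column
   ((g j != c1), (g j != c0)), so c0, c1 and the third colour are sent to the
   three nonzero vectors of GF(2)^2. *)
Section ColoringDesign.

Variables (n : nat) (g : 'I_n -> 'I_3) (i0 j0 : 'I_n).
Hypothesis g_i0j0 : g i0 != g j0.

Definition coloring_design : 'M['F_2]_(2, n) :=
  \matrix_(r < 2, j < n) (if r == ord0 then (g j != g j0)%:R else (g j != g i0)%:R).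

Let row0 j : row ord0 coloring_design 0 j = (g j != g j0)%:R.
Proof. by rewrite !mxE. Qed.

Let row1 j : row ord_max coloring_design 0 j = (g j != g i0)%:R.
Proof. by rewrite !mxE. Qed.

Lemma coloring_design_rank : \rank coloring_design = 2%N.
Proof.
have I2 (r : 'I_2) : r = ord0 \/ r = ord_max.
  by case: r => [[|[|?]] ?]; [left | right | ]; try apply/val_inj.
pose A : 'M['F_2]_(n, 2) := \matrix_(j, k) (j == if k == ord0 then i0 else j0)%:R.
have XA : coloring_design *m A = 1%:M.
  apply/matrixP => r k; rewrite !mxE (bigD1 (if k == ord0 then i0 else j0)) //=.
  rewrite big1 ?addr0 => [|j /negbTE jk]; last by rewrite !mxE jk mulr0.
  rewrite !mxE eqxx mulr1.
  by case: (I2 r) => ->; case: (I2 k) => ->; rewrite /= ?eqxx // ?g_i0j0 // eq_sym g_i0j0.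
apply/eqP; rewrite eqn_leq rank_leq_row /=.
by rewrite -[X in (X <= _)%N](mxrank1 'F_2 2) -XA mxrankM_maxl.
Qed.

Lemma coloring_design_main (i : 'I_n) : estimable coloring_design [set i].
Proof.
have [gi | gi] := eqVneq (g i) (g j0).
  apply: (estimable_of_row (row_sub ord_max _)).
  by rewrite big_set1 row1 gi eq_sym g_i0j0.
by apply: (estimable_of_row (row_sub ord0 _)); rewrite big_set1 row0 gi.
Qed.

Lemma coloring_design_pair (x y : 'I_n) :
  x != y -> g x != g y -> estimable coloring_design [set x; y].
Proof.
move=> xy gxy.
have sum2 (r : 'rV['F_2]_n) : \sum_(j in [set x; y]) r 0 j = r 0 x + r 0 y.
  by rewrite big_setU1 ?big_set1 // inE.
have odd (b1 b2 : bool) : b1 != b2 -> b1%:R + b2%:R = 1 :> 'F_2.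
  by case: b1; case: b2 => // _; rewrite ?addr0 ?add0r.
have [d0 | d0] := boolP ((g x != g j0) != (g y != g j0)).
  by apply: (estimable_of_row (row_sub ord0 _)); rewrite sum2 !row0 odd.
apply: (estimable_of_row (row_sub ord_max _)); rewrite sum2 !row1 odd //.
apply: contra gxy => /eqP d1; apply/eqP; move/negPn/eqP: d0 => d0.
exact: color_by_two_tests g_i0j0 d0 d1.
Qed.

End ColoringDesign.

(* A proper colouring of a graph on at least two vertices can be chosen to use
   two distinct colours: if it is constant, the graph has no edges. *)
Lemma two_colors (T : finType) (e : rel T) (i0 j0 : T) (f : T -> 'I_3) :
  i0 != j0 -> proper_on e setT f ->
  exists g (a b : T), proper_on e setT g /\ g a != g b.
Proof.
move=> i0j0 fT.
have [/existsP[a /existsP[b fab]] | same] := boolP [exists a, exists b, f a != f b].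
  by exists f, a, b.
exists (fun z => if z == i0 then ord0 else inord 1), i0, j0; split.
  move=> i j iT jT eij; case/negP: same.
  by apply/existsP; exists i; apply/existsP; exists j; apply: fT.
by rewrite eqxx (eq_sym j0) (negbTE i0j0); apply/eqP => /(congr1 val); rewrite /= inordK.
Qed.

Definition interaction_graph (n : nat) (Sg : {set {set 'I_n}}) : rel 'I_n :=
  fun i j => [set i; j] \in Sg.

Section InteractionGraph.

Variables (n : nat) (Sg : {set {set 'I_n}}).
Hypothesis two_factors : two_factor_set Sg.

Lemma interaction_graph_sym : symmetric (interaction_graph Sg).
Proof. by move=> i j; rewrite /interaction_graph setUC. Qed.

Lemma interaction_graph_irr : irreflexive (interaction_graph Sg).
Proof.
by move=> i; apply/negP => /two_factors; rewrite setUid cards1.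
Qed.

(* Distinct neighbours j of i give distinct interactions ij containing i. *)
Lemma interaction_graph_degree (i : 'I_n) :
  (#|nbr (interaction_graph Sg) setT i| <= degree Sg i)%N.
Proof.
rewrite /degree -(@card_in_imset _ _ (fun j => [set i; j])).
  apply/subset_leq_card/subsetP => s /imsetP[j]; rewrite inE => /andP[_ ij] ->.
  by rewrite inE set21 andbT.
move=> j1 j2; rewrite !inE /= => ij1 _ same.
have : j1 \in [set i; j2] by rewrite -same !inE eqxx orbT.
rewrite !inE => /orP[/eqP ji | /eqP //].
by move: ij1; rewrite ji interaction_graph_irr.
Qed.

End InteractionGraph.

Theorem theorem5 (n : nat) (Sg : {set {set 'I_n}}) :
  (2 <= n)%N ->
  two_factor_set Sg ->
  cond_i Sg \/ cond_ii Sg \/ cond_iii Sg ->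
  exists X : 'M['F_2]_(2, n),
    \rank X = 2%N /\
    (forall i : 'I_n, estimable X [set i]) /\
    (forall e, e \in Sg -> estimable X e).
Proof.
move=> n2 two_factors conds.
have esym := interaction_graph_sym Sg; have eirr := interaction_graph_irr two_factors.
have deg := interaction_graph_degree two_factors.
pose i0 : 'I_n := Ordinal (ltnW n2); pose j0 : 'I_n := Ordinal n2.
have [f fT _] : colorable (interaction_graph Sg) setT.
  case: conds => [[deg3 noK4] | [few | [acyclic | [i through]]]].
  - exact: brooks_subcubic esym eirr (fun i => leq_trans (deg i) (deg3 i)) noK4 setT.
  - apply: colorable_few_high_degree esym eirr _ setT; apply: leq_trans few.
    by apply/subset_leq_card/subsetP => i; rewrite !inE => /leq_trans; apply.
  - by apply: (colorable_cycles_through esym eirr (i0 := i0)) => s /acyclic.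
  - exact: (colorable_cycles_through esym eirr through).
have [g [a [b [gT gab]]]] := two_colors (isT : i0 != j0) fT.
exists (coloring_design g a b); split; first exact: coloring_design_rank.
split => [i | s sS]; first exact: coloring_design_main.
have /eqP/cards2P[x [y [xy sE]]] := two_factors s sS.
rewrite sE in sS *; have gxy : g x != g y := gT x y (in_setT x) (in_setT y) sS.
exact (coloring_design_pair gab xy gxy).
Qed.
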